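(* Let $r\ge1$, let $A$ be a forest of $r$ rooted trees without free edges, let $\overline a$ carry $r$ free edges, and let $a$ be without free edges, where $a$ and $\overline a$ are both aromas or both aromatic trees. Let $\mathcal G(a,A,\overline a)$ be the set of graftings of $A$ on $\overline a$ whose result is isomorphic to $a$, and $\mathcal C(a,A,\overline a)$ the set of admissible cuts $c$ of $a$ such that $P^c(a)\cong A$ and $\overline R^c(a)\cong\overline a$. Then \[|\mathcal C(a,A,\overline a)|=\frac{\sigma(a)}{\sigma(A)\,\sigma(\overline a)}\,|\mathcal G(a,A,\overline a)|.\]
   Context: Fix a finite set $C$ of decorations. A (rooted) tree is a finite connected directed graph with $C$-decorated vertices in which each vertex has exactly one outgoing edge except the root, which has none (edges point towards the root). An aroma is a finite connected directed graph in which every vertex has exactly one outgoing edge; it contains a unique cycle. An aromatic tree is a disjoint union of one tree and finitely many aromas. An object with free edges additionally carries at each vertex $v$ a number $r_v\ge0$ of free edges. $\sigma(\cdot)$ denotes the number of automorphisms preserving decorations (and free-edge numbers). A grafting of $A$ on $\overline a$ is a map $g$ from the set of the $r$ connected components of $A$ (considered as distinct) to the vertex set of $\overline a$ such that $|g^{-1}(v)|=r_v$ for every vertex $v$; its result is obtained by adding, for each component, an edge from its root to $g(\text{component})$ and removing all free edges. An admissible cut $c$ of $a$ is a set of edges of $a$, none lying on a cycle, such that every directed path contains at most one edge of $c$. Removing the edges of $c$, $P^c(a)$ is the forest of components containing neither the root nor a cycle (each rooted at the source of its cut edge), and $R^c(a)$ is the remaining part (containing the root and all cycles); $\overline R^c(a)$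 is $R^c(a)$ with, for each cut edge $u\to w$, a free edge added at $w$. *)

From HB Require Import structures.
From mathcomp Require Import all_boot all_order all_algebra.
Set Implicit Arguments. Unset Strict Implicit. Unset Printing Implicit Defensive.

(* A finite directed graph in which every vertex has at most one outgoing
   edge, given by [par v] (= Some w for an edge v -> w, None if v has no
   outgoing edge; Some v is a loop), with C-decorations [dec] and numbers of
   free edges [nfree]. Trees, aromas, forests, aromatic trees (with or without
   free edges) are all such graphs. *)
Record graph (C : finType) := Graph {
  vtx : finType;
  par : vtx -> option vtx;
  dec : vtx -> C;
  nfree : vtx -> nat }.

Section Graphs.
Variable C : finType.
Implicit Types G H : graph C.

Definition pstep G (x : option (vtx G)) : option (vtx G) := obind (@par C G) x.

Definition reach G (x y : vtx G) : bool :=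
  [exists k : 'I_(#|vtx G|).+1, iter k (@pstep G) (Some x) == Some y].

Definition on_cycle G (x : vtx G) : bool :=
  [exists k : 'I_(#|vtx G|), iter k.+1 (@pstep G) (Some x) == Some x].

Definition is_root G (x : vtx G) : bool := par x == None.

Definition adj G : rel (vtx G) :=
  fun u w => (par u == Some w) || (par w == Some u).
Definition connected G : bool :=
  [forall u : vtx G, [forall w : vtx G, connect (@adj G) u w]].

Definition no_free G : bool := [forall v : vtx G, nfree v == 0].
Definition total_free G : nat := \sum_(v : vtx G) nfree v.

Definition is_tree G : bool := connected G && (#|[set v : vtx G | is_root v]| == 1).

Definition is_aroma G : bool :=
  (0 < #|vtx G|) && connected G && [forall v : vtx G, ~~ is_root v].

(* an aromatic tree: disjoint union of one tree and finitely many aromas.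
   In a graph with out-degrees <= 1, each connected component is either a
   tree (exactly one root) or an aroma (no root), so this means: exactly one
   vertex without outgoing edge. *)
Definition is_aromatic_tree G : bool := #|[set v : vtx G | is_root v]| == 1.

(* a forest of r rooted trees: no cycles, every component is a tree, and
   there are r components (= r roots) *)
Definition is_forest (r : nat) G : bool :=
  [forall v : vtx G, ~~ on_cycle v] && (#|[set v : vtx G | is_root v]| == r).

Definition iso_map G H (f : vtx G -> vtx H) : bool :=
  [&& injectiveb f, #|vtx G| == #|vtx H| &
   [forall v : vtx G, [&& par (f v) == omap f (par v),
                  dec (f v) == dec v & nfree (f v) == nfree v]]].

Definition iso G H : bool := [exists f : {ffun vtx G -> vtx H}, iso_map f].

Definition sigma G : nat := #|[set f : {ffun vtx G -> vtx G} | iso_map f]|.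

(* the connected components of a forest A, identified with their roots *)
Definition comps G : finType := {x : vtx G | is_root x}.

Section Graft.
Variables (A abar : graph C) (g : comps A -> vtx abar).

Definition graft_par (x : (vtx A + vtx abar)%type) : option (vtx A + vtx abar) :=
  match x with
  | inl x => match par x with
             | Some y => Some (inl y)
             | None => omap (fun c => inr (g c)) (insub x : option (comps A))
             end
  | inr y => omap inr (par y)
  end.

Definition graft_dec (x : (vtx A + vtx abar)%type) : C :=
  match x with inl x => dec x | inr y => dec y end.

Definition graft : graph C :=
  @Graph C (vtx A + vtx abar)%type graft_par graft_dec (fun _ => 0).
End Graft.

Definition is_grafting (A abar : graph C) (g : {ffun comps A -> vtx abar}) : bool :=
  [forall v : vtx abar, #|[set c | g c == v]| == nfree v].

Definition graftings (a A abar : graph C) : {set {ffun comps A -> vtx abar}} :=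
  [set g | is_grafting g && iso (graft g) a].

(* a cut is given by the set of sources of its edges (each vertex has at most
   one outgoing edge, so an edge is determined by its source) *)
Definition admissible G (c : {set vtx G}) : bool :=
  [forall u in c, ~~ is_root u && ~~ on_cycle u] &&
  [forall u1 in c, [forall u2 in c,
     (u1 != u2) ==> ~~ [exists w : vtx G, (par u1 == Some w) && reach w u2]]].

Section Cut.
Variables (a : graph C) (c : {set vtx a}).

(* vertices of P^c(a): those whose directed path meets a cut edge, i.e. those
   whose component after removing c contains neither root nor cycle *)
Definition inP (v : vtx a) : bool := [exists u in c, reach v u].

Definition Pvtx : finType := {v : vtx a | inP v}.
Definition Rvtx : finType := {v : vtx a | ~~ inP v}.

Definition Ppar (v : Pvtx) : option Pvtx :=
  if val v \in c then None else obind insub (par (val v)).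
Definition Rpar (v : Rvtx) : option Rvtx := obind insub (par (val v)).

Definition Pc : graph C :=
  @Graph C Pvtx Ppar (fun v => dec (val v)) (fun v => nfree (val v)).

Definition Rbarc : graph C :=
  @Graph C Rvtx Rpar (fun v => dec (val v))
    (fun v => nfree (val v) + #|[set u in c | par u == Some (val v)]|).
End Cut.

Definition cuts (a A abar : graph C) : {set {set vtx a}} :=
  [set c | [&& admissible c, iso (Pc c) A & iso (Rbarc c) abar]].

End Graphs.

(* Double counting of the pairs (g, f) where g is a grafting of A on abar and
   f is an isomorphism from the grafted graph onto a.  Each grafting g with
   graft g ~ a carries sigma(a) such f.  Conversely, f maps the edges added by
   the grafting to an admissible cut c of a, and restricts to isomorphisms
   A ~ P^c(a) and abar ~ Rbar^c(a); every pair of isomorphisms of that kind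
   glues back to a unique pair (g, f) with that cut, so each cut of
   C(a, A, abar) arises from exactly sigma(A) sigma(abar) pairs. *)

From HB Require Import structures.
From mathcomp Require Import all_boot all_order all_algebra.
From mathcomp Require Import zify.
Set Implicit Arguments. Unset Strict Implicit. Unset Printing Implicit Defensive.

Section Walks.
Variables (C : finType) (G : graph C).
Implicit Types x y z : vtx G.
Local Notation walk k x := (iter k (@pstep C G) x).

Lemma walk_None k : walk k None = None.
Proof. by elim: k => //= k ->. Qed.

Lemma walk_defined j k x y : j <= k -> walk k (Some x) = Some y ->
  exists z, walk j (Some x) = Some z.
Proof.
move=> le_jk; rewrite -(subnK le_jk) iterD.
by case: (walk j _) => [z|]; [exists z | rewrite walk_None].
Qed.

Lemma walk_collision k x y : #|vtx G| <= k -> walk k (Some x) = Some y ->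
  exists i j z, [/\ i < j <= k, walk i (Some x) = Some z & walk j (Some x) = Some z].
Proof.
move=> le_Gk e.
pose F (i : 'I_k.+1) := odflt x (walk i (Some x)).
have /injectivePn [i [j neq_ij eqF]] : ~~ injectiveb F.
  apply/injectiveP => /leq_card; rewrite card_ord => le_kG.
  by have := leq_trans le_kG le_Gk; rewrite ltnn.
have [zi ei] := walk_defined (ltn_ord i : i <= k) e.
have [zj ej] := walk_defined (ltn_ord j : j <= k) e.
move: eqF; rewrite /F ei ej /= => ez; subst zj.
case: (ltngtP i j) => [lt_ij|lt_ji|/val_inj eq_ij].
- by exists i, j, zi; rewrite lt_ij -ltnS ltn_ord.
- by exists j, i, zi; rewrite lt_ji -ltnS ltn_ord.
- by rewrite eq_ij eqxx in neq_ij.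
Qed.

Lemma walk_short k x y : walk k (Some x) = Some y ->
  exists2 k', k' < #|vtx G| & walk k' (Some x) = Some y.
Proof.
elim/ltn_ind: k => k IH e.
have [lt_kG|le_Gk] := ltnP k #|vtx G|; first by exists k.
have [i [j [z [/andP [lt_ij le_jk] ei ej]]]] := walk_collision le_Gk e.
apply: (IH (k - j + i)); first by lia.
by rewrite iterD ei -ej -iterD subnK.
Qed.

Definition reachable x y := exists k, walk k (Some x) = Some y.

Lemma reachP x y : reflect (reachable x y) (reach x y).
Proof.
apply: (iffP existsP) => [[k /eqP e]|[k /walk_short [k' lt_k'G e']]].
  by exists k.
by exists (Ordinal (leqW lt_k'G)); apply/eqP.
Qed.

Lemma on_cycleP x : reflect (exists k, walk k.+1 (Some x) = Some x) (on_cycle x).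
Proof.
apply: (iffP existsP) => [[k /eqP e]|[k]]; first by exists k.
rewrite iterSr /=; case ex: (par x) => [y|]; last by rewrite walk_None.
move=> /walk_short [k' lt_k'G e']; exists (Ordinal lt_k'G); apply/eqP.
by rewrite /= -iterS iterSr /= ex.
Qed.

Lemma reachable_refl x : reachable x x.
Proof. by exists 0. Qed.

Lemma reachable_trans x y z : reachable x y -> reachable y z -> reachable x z.
Proof. by move=> [k1 e1] [k2 e2]; exists (k2 + k1); rewrite iterD e1. Qed.

Lemma reachable_par x y : par x = Some y -> reachable x y.
Proof. by move=> e; exists 1; rewrite /= e. Qed.

Lemma reachable_neq_par x y : reachable x y -> x != y ->
  exists2 w, par x = Some w & reachable w y.
Proof.
move=> [[|k] e] neq_xy; first by move: e neq_xy => /= [->]; rewrite eqxx.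
move: e; rewrite iterSr /=; case: (par x) => [w|]; last by rewrite walk_None.
by move=> e; exists w => //; exists k.
Qed.

Lemma acyclic_reachable_root : [forall v : vtx G, ~~ on_cycle v] ->
  forall x, exists2 rho, is_root rho & reachable x rho.
Proof.
move=> /forallP acyclic x.
have walk_out : walk #|vtx G| (Some x) = None.
  case e: (walk _ _) => [y|] //.
  have [i [j [z [/andP [lt_ij _] ei ej]]]] := walk_collision (leqnn _) e.
  suff : on_cycle z by rewrite (negbTE (acyclic z)).
  apply/on_cycleP; exists (j - i).-1; rewrite prednK ?subn_gt0 //.
  by rewrite -{1}ei -iterD subnK ?(ltnW lt_ij).
elim: #|vtx G| walk_out => [|m IH] //=.
case e: (walk m _) => [y|] /=; last by move=> _; apply: IH.
by move=> py; exists y; [apply/eqP | exists m].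
Qed.

End Walks.

Section IsoMap.
Variables (C : finType) (G H : graph C) (f : vtx G -> vtx H).
Hypothesis isof : iso_map f.

Lemma iso_inj : injective f.
Proof. by case/and3P: isof => /injectiveP. Qed.

Lemma iso_card : #|vtx G| = #|vtx H|.
Proof. by case/and3P: isof => _ /eqP. Qed.

Lemma iso_par v : par (f v) = omap f (par v).
Proof. by case/and3P: isof => _ _ /forallP /(_ v) /and3P [/eqP]. Qed.

Lemma iso_dec v : dec (f v) = dec v.
Proof. by case/and3P: isof => _ _ /forallP /(_ v) /and3P [_ /eqP]. Qed.

Lemma iso_nfree v : nfree (f v) = nfree v.
Proof. by case/and3P: isof => _ _ /forallP /(_ v) /and3P [_ _ /eqP]. Qed.

Lemma iso_bij : bijective f.
Proof. by apply: inj_card_bij iso_inj _; rewrite iso_card. Qed.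

Lemma iso_walk k (x : option (vtx G)) :
  iter k (@pstep C H) (omap f x) = omap f (iter k (@pstep C G) x).
Proof. by elim: k => //= k ->; case: (iter k _ x) => //= v; rewrite iso_par. Qed.

Lemma iso_reachable x y : reachable (f x) (f y) <-> reachable x y.
Proof.
split=> [[k e]|[k e]]; exists k; last by rewrite (iso_walk k (Some x)) e.
by move: e; rewrite (iso_walk k (Some x)); case: (iter k _ _) => //= v [/iso_inj ->].
Qed.

Lemma iso_reach x y : reach (f x) (f y) = reach x y.
Proof. by apply/reachP/reachP => /iso_reachable. Qed.

Lemma iso_on_cycle x : on_cycle (f x) = on_cycle x.
Proof.
apply/on_cycleP/on_cycleP => [[k e]|[k e]]; exists k.
  by move: e; rewrite (iso_walk k.+1 (Some x)); case: (iter k.+1 _ _) => //= v [/iso_inj ->].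
by rewrite (iso_walk k.+1 (Some x)) e.
Qed.

Lemma iso_inv : exists f' : {ffun vtx H -> vtx G},
  [/\ iso_map f', cancel f f' & cancel f' f].
Proof.
have [g fK gK] := iso_bij.
exists [ffun y => g y]; split=> [|x|y]; rewrite ?ffunE //.
apply/and3P; split.
- by apply/injectiveP => y1 y2; rewrite !ffunE => /(congr1 f); rewrite !gK.
- by rewrite iso_card.
apply/forallP => y; rewrite !ffunE.
have := iso_par (g y); rewrite -(iso_dec (g y)) -(iso_nfree (g y)) gK => ->.
by rewrite !eqxx !andbT; case: (par (g y)) => //= v; rewrite ffunE fK.
Qed.

End IsoMap.

Section Isos.
Variable C : finType.
Implicit Types G H K : graph C.

Lemma eq_iso_map G H (f1 f2 : vtx G -> vtx H) : f1 =1 f2 -> iso_map f1 = iso_map f2.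
Proof.
move=> e; rewrite /iso_map (eq_injectiveb e); congr [&& _, _ & _].
apply: eq_forallb => v; rewrite e; congr [&& _ == _, _ & _].
by case: (par v) => //= w; rewrite e.
Qed.

Lemma iso_map_ffun G H (f : vtx G -> vtx H) : iso_map [ffun x => f x] = iso_map f.
Proof. by apply: eq_iso_map => x; rewrite ffunE. Qed.

Lemma iso_map_id G : iso_map (@id (vtx G)).
Proof.
apply/and3P; split=> //; first exact/injectiveP.
by apply/forallP => v; rewrite !eqxx !andbT; case: (par v).
Qed.

Lemma iso_map_comp G H K (f : vtx G -> vtx H) (h : vtx H -> vtx K) :
  iso_map f -> iso_map h -> iso_map (h \o f).
Proof.
move=> isof isoh; apply/and3P; split.
- exact/injectiveP/inj_comp/(iso_inj isof)/(iso_inj isoh).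
- by rewrite (iso_card isof) (iso_card isoh).
apply/forallP => v /=; rewrite (iso_par isoh) (iso_par isof) (iso_dec isoh).
rewrite (iso_dec isof) (iso_nfree isoh) (iso_nfree isof) !eqxx !andbT.
by case: (par v).
Qed.

Lemma isoP G H : reflect (exists f : vtx G -> vtx H, iso_map f) (iso G H).
Proof.
apply: (iffP existsP) => [[f isof]|[f isof]]; first by exists f.
by exists [ffun x => f x]; rewrite iso_map_ffun.
Qed.

Lemma iso_sym G H : iso G H -> iso H G.
Proof. by case/isoP => f /iso_inv [f' [isof' _ _]]; apply/isoP; exists f'. Qed.

Definition isos G H := [set f : {ffun vtx G -> vtx H} | iso_map f].

Lemma sigma_gt0 G : 0 < sigma G.
Proof. by apply/card_gt0P; exists [ffun x => x]; rewrite inE iso_map_ffun iso_map_id. Qed.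

Lemma card_isos_precomp G H K (h : vtx G -> vtx H) : iso_map h ->
  #|isos G K| = #|isos H K|.
Proof.
move=> isoh; have [h' [isoh' hK h'K]] := iso_inv isoh.
have -> : isos G K = [set [ffun x => f (h x)] | f : {ffun vtx H -> vtx K} in isos H K].
  apply/setP => f; rewrite inE; apply/idP/imsetP => [isof|[f' isof' ->]].
    exists [ffun y => f (h' y)]; last by apply/ffunP => x; rewrite !ffunE hK.
    by rewrite inE iso_map_ffun; apply: iso_map_comp.
  by rewrite iso_map_ffun; apply: iso_map_comp; rewrite // inE in isof'.
apply: card_in_imset => f1 f2 _ _ /ffunP e; apply/ffunP => y.
by have := e (h' y); rewrite !ffunE h'K.
Qed.

Lemma card_isos_postcomp G H K (h : vtx H -> vtx K) : iso_map h ->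
  #|isos G H| = #|isos G K|.
Proof.
move=> isoh; have [h' [isoh' hK h'K]] := iso_inv isoh.
have -> : isos G K = [set [ffun x => h (f x)] | f : {ffun vtx G -> vtx H} in isos G H].
  apply/setP => f; rewrite inE; apply/idP/imsetP => [isof|[f' isof' ->]].
    exists [ffun x => h' (f x)]; last by apply/ffunP => x; rewrite !ffunE h'K.
    by rewrite inE iso_map_ffun; apply: iso_map_comp.
  by rewrite iso_map_ffun; apply: iso_map_comp; rewrite // inE in isof'.
apply/esym/card_in_imset => f1 f2 _ _ /ffunP e; apply/ffunP => x.
by have := e x; rewrite !ffunE => /(iso_inj isoh).
Qed.

End Isos.

Section Grafting.
Variables (C : finType) (A abar : graph C) (g : comps A -> vtx abar).
Local Notation walk k x := (iter k (@pstep C (graft g)) x).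

Lemma graft_par_root (rx : comps A) : @par C (graft g) (inl (val rx)) = Some (inr (g rx)).
Proof. by rewrite /= (eqP (valP rx)) valK. Qed.

Lemma graft_walk_inr k (y : option (vtx abar)) :
  walk k (omap inr y) = omap inr (iter k (@pstep C abar) y).
Proof. by elim: k => //= k ->; case: (iter k _ y). Qed.

Lemma graft_walk_inl k x y : iter k (@pstep C A) (Some x) = Some y ->
  walk k (Some (inl x)) = Some (inl y).
Proof.
elim: k y => [|k IH] y /=; first by move=> [->].
by case e: (iter k _ _) => [z|] //= pz; rewrite (IH z) //= pz.
Qed.

Lemma graft_not_reachable_inr_inl y x : ~ reachable (G := graft g) (inr y) (inl x).
Proof. by move=> [k]; rewrite (graft_walk_inr k (Some y)); case: (iter k _ _). Qed.

Lemma graft_root_not_on_cycle (rx : comps A) : ~~ on_cycle (G := graft g) (inl (val rx)).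
Proof.
apply/on_cycleP => [[k]]; rewrite iterSr.
have -> : pstep (G := graft g) (Some (inl (val rx))) = Some (inr (g rx)) :=
  graft_par_root rx.
by rewrite (graft_walk_inr k (Some (g rx))); case: (iter k _ _).
Qed.

End Grafting.

Lemma card_Pvtx_Rvtx (C : finType) (a : graph C) (c : {set vtx a}) :
  #|Pvtx c| + #|Rvtx c| = #|vtx a|.
Proof. by rewrite !card_sig cardC. Qed.

(* The image under f of the edges added by the grafting, each edge being
   represented by its source, as in [admissible]. *)
Definition grafted_cut (C : finType) (a A abar : graph C)
    (f : vtx A + vtx abar -> vtx a) : {set vtx a} :=
  [set u | [exists x : vtx A, is_root x && (f (inl x) == u)]].

Section GraftedCut.
Variables (C : finType) (a A abar : graph C) (g : {ffun comps A -> vtx abar})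
  (f : vtx A + vtx abar -> vtx a).
Hypothesis isof : @iso_map C (graft g) a f.
Hypothesis acyclicA : [forall v : vtx A, ~~ on_cycle v].
Local Notation c := (grafted_cut f).

Lemma mem_grafted_cut x : (f (inl x) \in c) = is_root x.
Proof.
rewrite inE; apply/existsP/idP => [[y /andP [ry /eqP /(iso_inj isof) [<-]]] // | rx].
by exists x; rewrite rx eqxx.
Qed.

Lemma grafted_cutP u : reflect (exists rx : comps A, u = f (inl (val rx))) (u \in c).
Proof.
rewrite inE; apply: (iffP existsP) => [[x /andP [rx /eqP <-]] | [rx ->]].
  by exists (Sub x rx).
by exists (val rx); rewrite (valP rx) eqxx.
Qed.

Lemma iso_graft_par_root (rx : comps A) : par (f (inl (val rx))) = Some (f (inr (g rx))).
Proof. by rewrite (iso_par isof) graft_par_root. Qed.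

Lemma iso_graft_par_inl x y : par x = Some y -> par (f (inl x)) = Some (f (inl y)).
Proof. by move=> e; rewrite (iso_par isof) /= e. Qed.

Lemma iso_graft_par_inr y : par (f (inr y)) = omap (fun z => f (inr z)) (par y).
Proof. by rewrite (iso_par isof) /=; case: (par y). Qed.

Lemma iso_graft_inP x : inP c (f (inl x)).
Proof.
have [rho rho_root [k e]] := acyclic_reachable_root acyclicA x.
apply/existsP; exists (f (inl rho)); rewrite mem_grafted_cut rho_root /=.
by apply/reachP/(iso_reachable isof); exists k; apply: graft_walk_inl.
Qed.

Lemma iso_graft_notinP y : ~~ inP c (f (inr y)).
Proof.
apply/existsP => [[_ /andP [/grafted_cutP [rx ->]]]].
by rewrite (iso_reach isof) => /reachP /graft_not_reachable_inr_inl.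
Qed.

Lemma grafted_cut_admissible : admissible c.
Proof.
apply/andP; split.
  apply/forall_inP => _ /grafted_cutP [rx ->].
  by rewrite /is_root iso_graft_par_root (iso_on_cycle isof) graft_root_not_on_cycle.
apply/forall_inP => _ /grafted_cutP [rx1 ->]; apply/forall_inP => _ /grafted_cutP [rx2 ->].
apply/implyP => _; apply/existsP => [[w /andP []]].
rewrite iso_graft_par_root => /eqP [<-].
by rewrite (iso_reach isof) => /reachP /graft_not_reachable_inr_inl.
Qed.

Lemma card_grafted_cut_par_inr y :
  #|[set u in c | par u == Some (f (inr y))]| = #|[set rx | g rx == y]|.
Proof.
have -> : [set u in c | par u == Some (f (inr y))] =
          [set f (inl (val rx)) | rx in [set rx | g rx == y]].
  apply/setP => u; rewrite inE; apply/andP/imsetP => [[/grafted_cutP [rx ->]] | [rx]].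
    rewrite iso_graft_par_root => /eqP [/(iso_inj isof) [<-]].
    by exists rx; rewrite ?inE.
  rewrite inE => /eqP <- ->; rewrite iso_graft_par_root; split=> //.
  by apply/grafted_cutP; exists rx.
by rewrite card_in_imset // => rx1 rx2 _ _ /(iso_inj isof) [/val_inj].
Qed.

Definition inl_to_Pc (x : vtx A) : Pvtx c := Sub (f (inl x)) (iso_graft_inP x).
Definition inr_to_Rbarc (y : vtx abar) : Rvtx c := Sub (f (inr y)) (iso_graft_notinP y).

Lemma inl_to_Pc_inj : injective inl_to_Pc.
Proof. by move=> x y /(congr1 val) /(iso_inj isof) [->]. Qed.

Lemma inr_to_Rbarc_inj : injective inr_to_Rbarc.
Proof. by move=> x y /(congr1 val) /(iso_inj isof) [->]. Qed.

Lemma card_Pc_Rbarc : #|vtx A| = #|Pvtx c| /\ #|vtx abar| = #|Rvtx c|.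
Proof.
have := leq_card _ inl_to_Pc_inj; have := leq_card _ inr_to_Rbarc_inj.
have : #|vtx A| + #|vtx abar| = #|Pvtx c| + #|Rvtx c|.
  by rewrite card_Pvtx_Rvtx -(iso_card isof) card_sum.
by lia.
Qed.

Lemma inl_to_Pc_iso : no_free A -> no_free a -> @iso_map C A (Pc c) inl_to_Pc.
Proof.
move=> /forallP noA /forallP noa.
apply/and3P; split; first exact/injectiveP/inl_to_Pc_inj.
  by rewrite (proj1 card_Pc_Rbarc).
apply/forallP => x /=; rewrite (iso_dec isof) (eqP (noa _)) (eqP (noA _)) !eqxx !andbT.
rewrite /Ppar /= mem_grafted_cut /is_root.
case e: (par x) => [y|] //=.
by rewrite (iso_graft_par_inl e) /= (insubT (inP c) (iso_graft_inP y)).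
Qed.

Lemma inr_to_Rbarc_iso : is_grafting g -> no_free a -> @iso_map C abar (Rbarc c) inr_to_Rbarc.
Proof.
move=> /forallP gr /forallP noa.
apply/and3P; split; first exact/injectiveP/inr_to_Rbarc_inj.
  by rewrite (proj2 card_Pc_Rbarc).
apply/forallP => y /=; rewrite (iso_dec isof) eqxx /=; apply/andP; split.
  rewrite /Rpar /= iso_graft_par_inr.
  case: (par y) => [z|] //=.
  by rewrite (insubT (fun v => ~~ inP c v) (iso_graft_notinP z)).
by rewrite (eqP (noa _)) add0n card_grafted_cut_par_inr (eqP (gr y)).
Qed.

End GraftedCut.

(* [y0] is a junk default: when f is an isomorphism from a grafted graph, the
   pick always succeeds. *)
Definition grafting_of_iso (C : finType) (a A abar : graph C) (y0 : vtx abar)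
    (f : vtx A + vtx abar -> vtx a) : {ffun comps A -> vtx abar} :=
  [ffun rx => odflt y0 [pick y | par (f (inl (val rx))) == Some (f (inr y))]].

Lemma grafting_of_iso_graft (C : finType) (a A abar : graph C) (y0 : vtx abar)
    (g : {ffun comps A -> vtx abar}) (f : vtx A + vtx abar -> vtx a) :
  @iso_map C (graft g) a f -> grafting_of_iso y0 f = g.
Proof.
move=> isof; apply/ffunP => rx; rewrite ffunE.
case: pickP => [y | /(_ (g rx))]; rewrite (iso_graft_par_root isof) ?eqxx //.
by move=> /eqP [/(iso_inj isof) [->]].
Qed.

Section Cuts.
Variables (C : finType) (a : graph C) (c : {set vtx a}).

Lemma inP_par v : inP c v -> v \notin c -> exists2 w, par v = Some w & inP c w.
Proof.
move=> /existsP [u /andP [uc /reachP ru]] vc.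
have [|w pw rw] := reachable_neq_par ru; first by apply: contraNneq vc => ->.
by exists w => //; apply/existsP; exists u; rewrite uc; apply/reachP.
Qed.

Lemma notinP_par v w : ~~ inP c v -> par v = Some w -> ~~ inP c w.
Proof.
move=> nv pv; apply: contra nv => /existsP [u /andP [uc /reachP ru]].
apply/existsP; exists u; rewrite uc; apply/reachP.
exact: reachable_trans (reachable_par pv) ru.
Qed.

Lemma cut_inP u : u \in c -> inP c u.
Proof. by move=> uc; apply/existsP; exists u; rewrite uc; apply/reachP/reachable_refl. Qed.

Lemma admissible_cut_par u : admissible c -> u \in c ->
  exists2 w, par u = Some w & ~~ inP c w.
Proof.
case/andP=> /forall_inP cut_ok /forall_inP incomparable uc.
have /andP [u_not_root u_acyclic] := cut_ok u uc.
move: u_not_root; rewrite /is_root; case e: (par u) => [w|] // _; exists w => //.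
apply/negP => /existsP [u' /andP [u'c /reachP [k rk]]].
have [eq_uu'|neq_uu'] := eqVneq u u'.
  subst u'; move/negP: u_acyclic; apply; apply/on_cycleP; exists k.
  by rewrite iterSr /= e.
move/forall_inP: (incomparable u uc) => /(_ u' u'c); rewrite neq_uu' /=.
by move/existsP; apply; exists w; rewrite e eqxx /=; apply/reachP; exists k.
Qed.

End Cuts.

Section Glue.
Variables (C : finType) (a A abar : graph C) (c : {set vtx a})
  (al : vtx A -> Pvtx c) (be : vtx abar -> Rvtx c) (y0 : vtx abar).
Hypothesis adm : admissible c.
Hypothesis isoal : @iso_map C A (Pc c) al.
Hypothesis isobe : @iso_map C abar (Rbarc c) be.
Hypothesis noa : no_free a.

Lemma iso_Pc_root x : (par x == None) = (val (al x) \in c).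
Proof.
have := iso_par isoal x; rewrite /= /Ppar; case: ifP => [_|vc]; first by case: (par x).
have [w pw iw] := inP_par (valP (al x)) (negbT vc).
by rewrite pw /= (insubT (inP c) iw); case: (par x).
Qed.

Lemma iso_Pc_par x y : par x = Some y -> par (val (al x)) = Some (val (al y)).
Proof.
move=> e; have := iso_par isoal x; rewrite /= /Ppar e /=.
case: ifP => // _; case: (par (val (al x))) => //= w.
by case: insubP => // w' _ <- [->].
Qed.

Lemma iso_Rbarc_par y : par (val (be y)) = omap (fun z => val (be z)) (par y).
Proof.
have := iso_par isobe y; rewrite /= /Rpar.
case e: (par (val (be y))) => [w|] /=; last by case: (par y).
rewrite (insubT (fun v => ~~ inP c v) (notinP_par (valP (be y)) e)).
by case: (par y) => //= z [<-].
Qed.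

Definition glue : {ffun vtx A + vtx abar -> vtx a} :=
  [ffun z => match z with inl x => val (al x) | inr y => val (be y) end].

Lemma glue_inj : injective glue.
Proof.
have inP_al x := valP (al x); have notinP_be y := valP (be y).
move=> [x1|y1] [x2|y2]; rewrite !ffunE.
- by move/val_inj/(iso_inj isoal) ->.
- by move=> e; move: (inP_al x1) (notinP_be y2); rewrite e => ->.
- by move=> e; move: (inP_al x2) (notinP_be y1); rewrite e => ->.
- by move/val_inj/(iso_inj isobe) ->.
Qed.

Lemma glue_par_root (rx : comps A) :
  par (val (al (val rx))) = Some (val (be (grafting_of_iso y0 glue rx))).
Proof.
have /admissible_cut_par [//|w pw nw] : val (al (val rx)) \in c.
  by rewrite -iso_Pc_root; apply: (valP rx).
have [be' beK be'K] := iso_bij isobe.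
rewrite pw ffunE; case: pickP => [y | /(_ (be' (Sub w nw)))]; rewrite !ffunE pw.
  by move/eqP.
by rewrite be'K eqxx.
Qed.

Lemma glue_iso : @iso_map C (graft (grafting_of_iso y0 glue)) a glue.
Proof.
move/forallP: noa => noa'.
apply/and3P; split; first exact/injectiveP/glue_inj.
  by rewrite /= card_sum (iso_card isoal) (iso_card isobe) card_Pvtx_Rvtx.
apply/forallP => -[x|y]; rewrite ffunE (eqP (noa' _)) eqxx andbT.
- rewrite (iso_dec isoal x : dec (val (al x)) = _) eqxx andbT; case e: (par x) => [y|].
    by rewrite (iso_Pc_par e) /= e /= ffunE.
  have rx : is_root x by apply/eqP.
  rewrite (graft_par_root _ (Sub x rx)) /= ffunE.
  by apply/eqP; exact: glue_par_root (Sub x rx).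
- rewrite (iso_dec isobe y : dec (val (be y)) = _) eqxx andbT iso_Rbarc_par /=.
  by case: (par y) => //= z; rewrite ffunE.
Qed.

Lemma grafted_cut_glue : grafted_cut glue = c.
Proof.
have [al' alK al'K] := iso_bij isoal.
apply/setP => u; apply/grafted_cutP/idP => [[rx ->] | uc].
  by rewrite ffunE -iso_Pc_root; apply: (valP rx).
have ru : is_root (al' (Sub u (cut_inP uc))) by rewrite /is_root iso_Pc_root al'K.
by exists (Sub _ ru); rewrite ffunE al'K.
Qed.

Lemma glue_grafting : is_grafting (grafting_of_iso y0 glue).
Proof.
apply/forallP => y; rewrite -(card_grafted_cut_par_inr glue_iso) grafted_cut_glue.
by rewrite ffunE -(iso_nfree isobe y) /= (eqP (forallP noa _)).
Qed.

End Glue.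

Section DoubleCounting.
Variables (C : finType) (a A abar : graph C) (y0 : vtx abar).
Hypothesis acyclicA : [forall v : vtx A, ~~ on_cycle v].
Hypothesis noA : no_free A.
Hypothesis noa : no_free a.

Local Notation graftingT := {ffun comps A -> vtx abar}.
Local Notation isoT := {ffun vtx A + vtx abar -> vtx a}.

Definition grafting_isos : {set graftingT * isoT} :=
  [set p : graftingT * isoT | (p.1 \in graftings a A abar) && @iso_map C (graft p.1) a p.2].

Lemma card_grafting_isos : #|grafting_isos| = #|graftings a A abar| * sigma a.
Proof.
rewrite -sum1_card; under eq_bigl do rewrite inE.
rewrite -(pair_big_dep (fun g => g \in graftings a A abar)
  (fun g (f : isoT) => @iso_map C (graft g) a f) (fun _ _ => 1)) /=.
rewrite -sum_nat_const; apply: eq_bigr => g; rewrite inE => /andP [_ /isoP [h isoh]].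
by rewrite sum1dep_card (card_isos_precomp _ isoh).
Qed.

Lemma grafted_cut_grafting_isos p : p \in grafting_isos -> grafted_cut p.2 \in cuts a A abar.
Proof.
rewrite !inE => /andP [/andP [gr _] isof]; rewrite (grafted_cut_admissible isof) /=.
apply/andP; split; apply/iso_sym/isoP.
  by exists (inl_to_Pc isof acyclicA); apply: inl_to_Pc_iso.
by exists (inr_to_Rbarc isof); apply: inr_to_Rbarc_iso.
Qed.

Definition glue_pair (c : {set vtx a})
    (q : {ffun vtx A -> Pvtx c} * {ffun vtx abar -> Rvtx c}) : graftingT * isoT :=
  (grafting_of_iso y0 (glue q.1 q.2), glue q.1 q.2).

Lemma glue_pair_inj c : injective (@glue_pair c).
Proof.
move=> [al1 be1] [al2 be2] [_ /ffunP e]; congr (_, _); apply/ffunP => x; apply: val_inj.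
  by have := e (inl x); rewrite !ffunE.
by have := e (inr x); rewrite !ffunE.
Qed.

Lemma grafting_isos_fiber c : c \in cuts a A abar ->
  [set p in grafting_isos | grafted_cut p.2 == c] =
  @glue_pair c @: setX (isos A (Pc c)) (isos abar (Rbarc c)).
Proof.
rewrite inE => /and3P [adm _ _]; apply/setP => -[g f]; rewrite inE.
apply/andP/imsetP => [[pS /eqP /= <-] | [[al be]]].
  move: pS; rewrite inE /= => /andP [/[dup] gG]; rewrite inE => /andP [gr _] isof.
  exists ([ffun x => inl_to_Pc isof acyclicA x], [ffun y => inr_to_Rbarc isof y]).
    by rewrite !inE !iso_map_ffun inl_to_Pc_iso // inr_to_Rbarc_iso.
  have fE : glue [ffun x => inl_to_Pc isof acyclicA x] [ffun y => inr_to_Rbarc isof y] = f.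
    by apply/ffunP => -[x|y]; rewrite !ffunE.
  by rewrite /glue_pair /= fE (grafting_of_iso_graft _ isof).
rewrite !inE /= => /andP [isoal isobe] [-> ->].
have isog := glue_iso y0 adm isoal isobe noa.
rewrite grafted_cut_glue // isog (glue_grafting y0 adm isoal isobe noa) eqxx andbT.
by split=> //; apply/isoP; exists (glue al be).
Qed.

Lemma card_grafting_isos_fiber c : c \in cuts a A abar ->
  #|[set p in grafting_isos | grafted_cut p.2 == c]| = sigma A * sigma abar.
Proof.
move=> cutc; rewrite grafting_isos_fiber // card_imset; last exact: glue_pair_inj.
move: cutc; rewrite inE => /and3P [_ /isoP [hP isohP] /isoP [hR isohR]].
by rewrite cardsX (card_isos_postcomp _ isohP) (card_isos_postcomp _ isohR).
Qed.

Lemma card_grafting_isos_cuts :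
  #|grafting_isos| = #|cuts a A abar| * (sigma A * sigma abar).
Proof.
rewrite -sum1_card (partition_big (fun p : graftingT * isoT => grafted_cut p.2)
  (mem (cuts a A abar))) /=.
  rewrite -sum_nat_const; apply: eq_bigr => c cutc.
  by rewrite -(card_grafting_isos_fiber cutc) -sum1_card; apply: eq_bigl => p; rewrite inE.
exact: grafted_cut_grafting_isos.
Qed.

End DoubleCounting.

Unset Implicit Arguments.
Import GRing.Theory Num.Theory.
Local Open Scope ring_scope.

Theorem proposition4p12 (C : finType) (r : nat) (a A abar : graph C) :
  (1 <= r)%N ->
  is_forest r A -> no_free A ->
  total_free abar = r ->
  no_free a ->
  (is_aroma a && is_aroma abar) || (is_aromatic_tree a && is_aromatic_tree abar) ->
  (#|cuts a A abar|%:R : rat)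
    = (sigma a)%:R / ((sigma A)%:R * (sigma abar)%:R) * (#|graftings a A abar|)%:R.
Proof.
move=> r_gt0 /andP [acyclicA _] noA total_free_r noa _.
have [y0 _] : exists y0 : vtx abar, (0 < nfree y0)%N.
  apply/existsP; apply: contraLR r_gt0; rewrite negb_exists -total_free_r => /forallP n0.
  by rewrite -leqNgt leqn0 sum_nat_eq0; apply/forallP => v; rewrite -leqn0 leqNgt n0.
have double_count := card_grafting_isos_cuts y0 acyclicA noA noa.
rewrite card_grafting_isos in double_count.
have sigmaAabar_neq0 : (sigma A)%:R * (sigma abar)%:R != 0 :> rat.
  by rewrite mulf_neq0 // pnatr_eq0 -lt0n sigma_gt0.
apply: (mulIf sigmaAabar_neq0).
by rewrite mulrAC divfK // -!natrM -double_count mulnC.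
Qed.
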